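(* Let $C$ be a linear $[n,k,2]_q$ completely regular code with covering radius $\rho=1$, and let $n_a$ be the number of codewords at distance one from any vector not in $C$. Let $A$ be a generator matrix of the repetition $[n_a,1,n_a]_q$ code. (i) If $k=n-1$, then $C$ is linearly equivalent to the code with parity-check matrix $H=A$. (ii) If $k<n-1$, then $C$ is linearly equivalent to the code with parity-check matrix $H=A\otimes B$, where $B$ is a parity-check matrix of a $q$-ary Hamming code of length $n_b=n/n_a$ (in particular such a Hamming code exists).
   Context: $\mathbb{F}_q$ is the finite field with $q$ elements; Hamming distance; covering radius $\rho=\max_{\bf v}\min_{{\bf x}\in C}d({\bf v},{\bf x})$. $C$ is completely regular if for every vector ${\bf x}$, with $t=d({\bf x},C)$, the number of codewords at distance $i$ from ${\bf x}$ depends only on $t$ and $i$ (so $n_a$ is well defined). The repetition $[n,1,n]_q$ code is $\{(c,\dots,c)\}$. For $m\ge 2$ a $q$-ary Hamming code of length $(q^m-1)/(q-1)$ is a linear code with an $m\times (q^m-1)/(q-1)$ parity-check matrix whose columns are nonzero and pairwise linearly independent. Two codes are linearly equivalent if one is the image of the other under ${\bf x}\mapsto{\bf x}M$ for a monomial matrix $M$. $A\otimes B$ denotes the Kronecker product (each entry $a_{r,s}$ of $A$ replaced by the block $a_{r,s}B$). *)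

From HB Require Import structures.
From mathcomp Require Import all_boot all_order all_algebra.
From mathcomp Require Export mxtens.
Set Implicit Arguments. Unset Strict Implicit. Unset Printing Implicit Defensive.
Import GRing.Theory.
Local Open Scope ring_scope.

Section Codes.
Variable F : finFieldType.

Definition hdist n (x y : 'rV[F]_n) : nat := #|[set i : 'I_n | x 0 i != y 0 i]|.

Definition is_linear_code n (C : {set 'rV[F]_n}) : Prop :=
  (0 : 'rV[F]_n) \in C /\
  forall (a : F) (x y : 'rV[F]_n), x \in C -> y \in C -> a *: x + y \in C.

Definition is_nkd_code n k d (C : {set 'rV[F]_n}) : Prop :=
  [/\ is_linear_code C, #|C| = (#|F| ^ k)%N,
      exists2 x, x \in C & exists2 y, y \in C & x != y /\ hdist x y = d
    & forall x y, x \in C -> y \in C -> x != y -> (d <= hdist x y)%N].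

(* distance from v to C (= min over codewords; n is a harmless default
   since all distances are <= n) *)
Definition dist_code n (C : {set 'rV[F]_n}) (v : 'rV[F]_n) : nat :=
  \big[minn/n]_(x in C) hdist v x.

Definition covering_radius n (C : {set 'rV[F]_n}) : nat :=
  \max_(v : 'rV[F]_n) dist_code C v.

Definition nb_at n (C : {set 'rV[F]_n}) (x : 'rV[F]_n) (i : nat) : nat :=
  #|[set c in C | hdist x c == i]|.

Definition completely_regular n (C : {set 'rV[F]_n}) : Prop :=
  forall x y : 'rV[F]_n, dist_code C x = dist_code C y ->
    forall i, nb_at C x i = nb_at C y i.

Definition pcm_code m n (H : 'M[F]_(m, n)) : {set 'rV[F]_n} :=
  [set x : 'rV[F]_n | H *m x^T == 0].

Definition gen_code k n (G : 'M[F]_(k, n)) : {set 'rV[F]_n} :=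
  [set x : 'rV[F]_n | (x <= G)%MS].

Definition repetition_code n : {set 'rV[F]_n} :=
  [set x : 'rV[F]_n | [exists c : F, x == const_mx c]].

(* monomial matrix: exactly one nonzero entry in each row and each column
   (this forces the matrix to be square) *)
Definition monomial m n (M : 'M[F]_(m, n)) : Prop :=
  (forall i, #|[set j | M i j != 0]| = 1%N) /\
  (forall j, #|[set i | M i j != 0]| = 1%N).

Definition lin_equiv n1 n2 (C1 : {set 'rV[F]_n1}) (C2 : {set 'rV[F]_n2}) : Prop :=
  exists M : 'M[F]_(n1, n2), monomial M /\ C2 = [set x *m M | x in C1].

Definition hamming_pcm m nb (B : 'M[F]_(m, nb)) : Prop :=
  [/\ (2 <= m)%N, nb = ((#|F| ^ m - 1) %/ (#|F| - 1))%N,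
      forall j, col j B != 0
    & forall j j', j != j' -> \rank (row_mx (col j B) (col j' B)) = 2%N].

End Codes.

From HB Require Import structures.
From mathcomp Require Import all_boot all_order all_algebra.
From mathcomp Require Import mxtens zify.
Import GRing.Theory.
Local Open Scope ring_scope.

Set Implicit Arguments. Unset Strict Implicit. Unset Printing Implicit Defensive.

(* Let H be a full-rank r x n parity-check matrix of C, so that k = n - r.  Minimum
   distance 2 makes the columns of H nonzero, and since every syndrome u is attained,
   the codewords at distance one from a vector of syndrome u <> 0 correspond to the
   columns of H proportional to u.  Hence each point of the projective space PG(r-1, q)
   is represented by exactly n_a columns of H.  If r = 1 there is a single point, so
   n = n_a and H is a rescaling of A.  If r >= 2, the points are represented by the
   columns of any Hamming parity-check matrix B, so the columns of H are, up to order
   and nonzero scalars, the n_a n_b columns of A (x) B; the corresponding monomial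
   matrix maps C onto the code of A (x) B. *)

Section DisjointFamily.
Variables (T J : finType) (X : J -> {set T}).
Hypothesis X_disjoint : forall j j', j != j' -> [disjoint X j & X j'].

Lemma card_bigcup_disjoint : #|\bigcup_j X j| = (\sum_j #|X j|)%N.
Proof.
rewrite -sum1_card (partition_disjoint_bigcup _ _ X_disjoint).
by apply: eq_bigr => j _; rewrite sum1_card.
Qed.

Lemma uniform_cover_bij c : (forall x, exists j, x \in X j) ->
    (forall j, #|X j| = c) ->
  exists2 tau : 'I_c * J -> T, bijective tau & forall k j, tau (k, j) \in X j.
Proof.
move=> X_cover X_card.
pose tau (kj : 'I_c * J) : T := enum_val (cast_ord (esym (X_card kj.2)) kj.1).
have tauX k j : tau (k, j) \in X j by apply: enum_valP.
exists tau => //; apply: inj_card_bij.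
  move=> [k j] [k' j'] e; have ej : j = j'.
    apply/eqP; apply: contraTT (tauX k' j') => /X_disjoint dis.
    by rewrite -e (disjointFr dis (tauX k j)).
  subst j'; congr (_, _).
  by move/enum_val_inj: e => /(congr1 val) /= /val_inj.
have -> : #|T| = #|\bigcup_j X j|.
  by apply: eq_card => x; have [j xj] := X_cover x; apply/esym/bigcupP; exists j.
rewrite card_bigcup_disjoint card_prod card_ord mulnC -sum_nat_const.
by under eq_bigr do rewrite X_card.
Qed.

End DisjointFamily.

Section Proportional.
Variable F : finFieldType.
Local Notation q := #|F|.

Definition proportional m n (u v : 'M[F]_(m, n)) : bool :=
  [exists a : F, (a != 0) && (a *: u == v)].

Section Matrices.
Variables m n : nat.
Implicit Types u v w : 'M[F]_(m, n).

Lemma proportionalP u v : reflect (exists2 a, a != 0 & a *: u = v) (proportional u v).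
Proof.
apply: (iffP existsP) => [[a /andP[a0 /eqP e]]|[a a0 e]]; first by exists a.
by exists a; rewrite a0 e eqxx.
Qed.

Lemma proportional_refl u : proportional u u.
Proof. by apply/proportionalP; exists 1; rewrite ?oner_eq0 ?scale1r. Qed.

Lemma proportional_sym u v : proportional u v -> proportional v u.
Proof.
move=> /proportionalP[a a0 <-]; apply/proportionalP; exists a^-1.
  by rewrite invr_eq0.
by rewrite scalerA mulVf // scale1r.
Qed.

Lemma proportional_trans v u w :
  proportional u v -> proportional v w -> proportional u w.
Proof.
move=> /proportionalP[a a0 <-] /proportionalP[b b0 <-]; apply/proportionalP.
by exists (b * a); rewrite ?mulf_neq0 ?scalerA.
Qed.

Lemma proportionalZr u v c : c != 0 -> proportional u v -> proportional u (c *: v).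
Proof.
move=> c0 /proportional_trans; apply; apply/proportionalP; exists c => //.
Qed.

Lemma proportional_neq0 u v : u != 0 -> proportional u v -> v != 0.
Proof. by move=> u0 /proportionalP[a a0 <-]; rewrite scaler_eq0 negb_or a0. Qed.

Lemma card_proportional u : u != 0 -> #|[set v | proportional u v]| = q.-1.
Proof.
move=> u0; have -> : [set v | proportional u v] = (fun a : F => a *: u) @: [set~ 0].
  apply/setP => v; rewrite inE; apply/proportionalP/imsetP => [[a a0 <-]|[a]].
    by exists a; rewrite // !inE.
  by rewrite !inE => a0 ->; exists a.
rewrite card_in_imset ?cardsC1 // => a b _ _ /eqP.
by rewrite -subr_eq0 -scalerBl scaler_eq0 (negPf u0) orbF subr_eq0 => /eqP.
Qed.

Lemma proportional_disjoint (T : finType) (f : T -> 'M[F]_(m, n)) u v :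
  ~~ proportional u v ->
  [disjoint [set x | proportional u (f x)] & [set x | proportional v (f x)]].
Proof.
move=> nuv; rewrite -setI_eq0; apply/eqP/setP => x; rewrite !inE.
apply/negbTE/negP => /andP[ux vx]; case/negP: nuv.
exact: proportional_trans ux (proportional_sym vx).
Qed.

End Matrices.

Lemma proportional_tr m n (u v : 'M[F]_(m, n)) : proportional u^T v^T = proportional u v.
Proof.
apply/proportionalP/proportionalP => -[a a0 e]; exists a => //.
  by apply: trmx_inj; rewrite linearZ.
by rewrite -linearZ e.
Qed.

Lemma proportional_castmx m n m' n' (e : (m = m') * (n = n')) (u v : 'M[F]_(m, n)) :
  proportional (castmx e u) (castmx e v) = proportional u v.
Proof. by case: e => em en; case: m' / em; case: n' / en. Qed.

Lemma proportional_11 (u v : 'M[F]_1) : u != 0 -> v != 0 -> proportional u v.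
Proof.
have entry_neq0 (w : 'M[F]_1) : w != 0 -> w 0 0 != 0.
  by apply: contraNneq => w0; apply/eqP/matrixP => i j; rewrite !ord1 w0 mxE.
move=> /entry_neq0 u0 /entry_neq0 v0; apply/proportionalP.
exists (v 0 0 / u 0 0); first by rewrite mulf_neq0 ?invr_eq0.
by apply/matrixP => i j; rewrite !ord1 mxE divfK.
Qed.

Lemma rank_row_mx_eq2 m (u v : 'cV[F]_m) : u != 0 -> v != 0 ->
  (\rank (row_mx u v) == 2%N) = ~~ proportional u v.
Proof.
rewrite -proportional_tr -mxrank_tr tr_row_mx -(trmx_eq0 u) -(trmx_eq0 v).
move: u^T v^T => {}u {}v u0 v0.
have -> : \rank (col_mx u v) = \rank (u + v)%MS by rewrite (addsmxE u v).1.
have -> : proportional u v = (v <= u)%MS.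
  apply/proportionalP/sub_rVP => [[a _ <-]|[a e]]; first by exists a.
  by exists a; [apply: contraNneq v0 => a0; rewrite e a0 scale0r | rewrite e].
have [le_u eq_u] := mxrank_leqif_sup (addsmxSl u v).
have [le_uv _] := mxrank_adds_leqif u v.
rewrite addsmx_sub submx_refl /= in eq_u.
rewrite -eq_u; move: le_u le_uv; rewrite !rank_rV u0 v0 /=; lia.
Qed.
End Proportional.

Section ProjectivePoints.
Variables (F : finFieldType) (m : nat).
Local Notation q := #|F|.

Definition proj_point_reps nb (b : 'I_nb -> 'cV[F]_m) : Prop :=
  [/\ forall j, b j != 0,
      forall j j', proportional (b j) (b j') -> j = j'
    & forall w, w != 0 -> exists j, proportional (b j) w].

Lemma card_proportional_bigcup nb (b : 'I_nb -> 'cV[F]_m) :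
    (forall j, b j != 0) -> (forall j j', proportional (b j) (b j') -> j = j') ->
  #|\bigcup_j [set w | proportional (b j) w]| = (nb * (q - 1))%N.
Proof.
move=> b0 b_inj; rewrite card_bigcup_disjoint => [|j j' neq].
  under eq_bigr do rewrite card_proportional //.
  by rewrite sum_nat_const card_ord subn1.
by apply: (proportional_disjoint id); apply: contra neq => /b_inj ->.
Qed.

Lemma card_nonzero_cV : #|[set~ (0 : 'cV[F]_m)]| = (q ^ m - 1)%N.
Proof. by rewrite cardsC1 card_mx muln1 subn1. Qed.

Lemma card_proj_point_reps nb (b : 'I_nb -> 'cV[F]_m) :
  proj_point_reps b -> (nb * (q - 1) = q ^ m - 1)%N.
Proof.
move=> [b0 b_inj b_cover]; rewrite -(card_proportional_bigcup b0 b_inj) -card_nonzero_cV.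
apply: eq_card => w; rewrite !inE; apply/bigcupP/idP => [[j _]|w0].
  by rewrite inE; apply: proportional_neq0.
by have [j jw] := b_cover w w0; exists j; rewrite ?inE.
Qed.

Lemma proj_point_reps_by_card nb (b : 'I_nb -> 'cV[F]_m) :
    (forall j, b j != 0) -> (forall j j', proportional (b j) (b j') -> j = j') ->
    (nb * (q - 1) = q ^ m - 1)%N ->
  proj_point_reps b.
Proof.
move=> b0 b_inj card_b; split => // w w0.
have : w \in \bigcup_j [set w | proportional (b j) w].
  suff -> : \bigcup_j [set w | proportional (b j) w] = [set~ 0] by rewrite !inE.
  apply/eqP; rewrite eqEcard card_proportional_bigcup // card_b card_nonzero_cV.
  rewrite leqnn andbT; apply/subsetP => v /bigcupP[j _]; rewrite !inE.
  exact: proportional_neq0.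
by case/bigcupP => j _; rewrite inE; exists j.
Qed.

(* [pick] only sees the class of [u], so this is a canonical point of the class. *)
Definition proj_rep (u : 'cV[F]_m) : 'cV[F]_m := odflt 0 [pick w | proportional u w].

Lemma proportional_proj_rep u : proportional u (proj_rep u).
Proof. by rewrite /proj_rep; case: pickP => //= /(_ u); rewrite proportional_refl. Qed.

Lemma proj_rep_eq u v : proportional u v -> proj_rep u = proj_rep v.
Proof.
move=> uv; rewrite /proj_rep; congr odflt; apply: eq_pick => w /=.
by apply/idP/idP; [apply: proportional_trans (proportional_sym uv) | apply: proportional_trans uv].
Qed.

Lemma proj_point_reps_exist : exists nb (b : 'I_nb -> 'cV[F]_m), proj_point_reps b.
Proof.
pose R := [set proj_rep u | u in [set~ 0]].
pose b (j : 'I_#|R|) : 'cV[F]_m := enum_val j.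
have Rrep j : exists2 u, u != 0 & b j = proj_rep u.
  have /imsetP[u] : b j \in [set proj_rep u | u in [set~ 0]] := enum_valP j.
  by rewrite !inE => u0 bju; exists u.
exists #|R|, b; split.
- move=> j; have [u u0 ->] := Rrep j.
  exact: proportional_neq0 u0 (proportional_proj_rep u).
- move=> j j' bjj'; apply: enum_val_inj; rewrite -/(b j) -/(b j').
  have [u _ bj] := Rrep j; have [u' _ bj'] := Rrep j'.
  rewrite bj bj' in bjj' *; apply: proj_rep_eq.
  apply: proportional_trans (proportional_proj_rep u) _.
  exact: proportional_trans bjj' (proportional_sym (proportional_proj_rep u')).
- move=> w w0; have wR : proj_rep w \in R by rewrite imset_f // !inE.
  exists (enum_rank_in wR (proj_rep w)); rewrite /b enum_rankK_in //.
  exact: proportional_sym (proportional_proj_rep w).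
Qed.

Lemma hamming_pcm_reps nb (B : 'M[F]_(m, nb)) :
  hamming_pcm B -> proj_point_reps (fun j => col j B).
Proof.
move=> [_ nbE B0 B2]; apply: proj_point_reps_by_card => // [j j' jj'|].
  by apply/eqP; apply: contraLR jj' => /B2/eqP; rewrite rank_row_mx_eq2.
by rewrite nbE divnK // !subn1 predn_exp dvdn_mulr.
Qed.

Lemma reps_hamming_pcm nb (b : 'I_nb -> 'cV[F]_m) :
  (2 <= m)%N -> proj_point_reps b -> hamming_pcm (\matrix_(i, j) b j i 0).
Proof.
move=> m2 b_reps; have [b0 b_inj _] := b_reps.
have colE j : col j (\matrix_(i, j) b j i 0) = b j by apply/colP => i; rewrite !mxE.
split => // [|j|j j' neq]; rewrite ?colE //.
  by rewrite -(card_proj_point_reps b_reps) mulnK // subn_gt0 card_finNzRing_gt1.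
by apply/eqP; rewrite rank_row_mx_eq2 //; apply: contra neq => /b_inj ->.
Qed.

End ProjectivePoints.

Lemma proj_point_reps_dim (F : finFieldType) m m' nb (b : 'I_nb -> 'cV[F]_m)
    (b' : 'I_nb -> 'cV[F]_m') :
  proj_point_reps b -> proj_point_reps b' -> m = m'.
Proof.
move=> /card_proj_point_reps card_b /card_proj_point_reps; rewrite card_b => e.
have q_gt1 := card_finNzRing_gt1 F; apply: (expnI q_gt1).
have := expn_gt0 #|F| m; have := expn_gt0 #|F| m'; rewrite (ltnW q_gt1) /=.
by move: e; move: (#|F| ^ m)%N (#|F| ^ m')%N => x x'; lia.
Qed.


Section ParityCheck.
Variable F : finFieldType.
Local Notation q := #|F|.

Lemma card_gen_code k n (G : 'M[F]_(k, n)) : #|gen_code G| = (q ^ \rank G)%N.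
Proof.
have -> : gen_code G = (fun u : 'rV_(\rank G) => u *m row_base G) @: setT.
  apply/setP => x; rewrite inE; apply/idP/imsetP.
    by rewrite -(eq_row_base G) => /submxP[u ->]; exists u.
  by move=> [u _ ->]; rewrite -(eq_row_base G) submxMl.
rewrite card_imset ?cardsT ?card_mx ?mul1n //.
exact: row_free_inj (row_base_free G).
Qed.

Lemma pcm_code_kermx r n (H : 'M[F]_(r, n)) : pcm_code H = gen_code (kermx H^T).
Proof. by apply/setP => x; rewrite !inE -trmx_eq0 trmx_mul trmxK sub_kermx. Qed.

Lemma card_pcm_code r n (H : 'M[F]_(r, n)) :
  row_free H -> #|pcm_code H| = (q ^ (n - r))%N.
Proof. by move=> /eqP Hr; rewrite pcm_code_kermx card_gen_code mxrank_ker mxrank_tr Hr. Qed.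

Lemma pcm_code_castmx r r' n (e : r = r') (H : 'M[F]_(r, n)) :
  pcm_code (castmx (e, erefl n) H) = pcm_code H.
Proof. by case: r' / e. Qed.

Lemma linear_code_gen n (C : {set 'rV[F]_n}) :
  is_linear_code C -> exists k (G : 'M[F]_(k, n)), C = gen_code G.
Proof.
move=> [C0 C_lin].
have CD x y : x \in C -> y \in C -> x + y \in C.
  by move=> xC yC; have := C_lin 1 x y xC yC; rewrite scale1r.
have CZ a x : x \in C -> a *: x \in C.
  by move=> xC; have := C_lin a x 0 xC C0; rewrite addr0.
pose G : 'M[F]_(#|C|, n) := \matrix_i enum_val i.
have rowG i : row i G = enum_val i by rewrite rowK.
exists #|C|, G; apply/setP => x; rewrite inE; apply/idP/idP => [xC|/submxP[u ->]].
  by rewrite -(enum_rankK_in xC xC) -rowG row_sub.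
rewrite mulmx_sum_row; apply: (big_ind (fun x => x \in C)) => // i _.
by rewrite rowG; apply/CZ/enum_valP.
Qed.

Lemma gen_code_pcm k n (G : 'M[F]_(k, n)) :
  exists r (H : 'M[F]_(r, n)), row_free H /\ gen_code G = pcm_code H.
Proof.
pose P := cokermx G; exists (\rank P), (col_base P)^T; split.
  by rewrite /row_free mxrank_tr; apply: col_base_full.
apply/setP => x; rewrite !inE submxE -/P -{1}(mulmx_base P) mulmxA.
by rewrite mulmx_free_eq0 ?row_base_free // -trmx_eq0 trmx_mul.
Qed.

End ParityCheck.

Section DistanceOne.
Variable F : finFieldType.
Implicit Types (n r : nat) (a : F).

Lemma hdist_sub_delta n (v : 'rV[F]_n) a i :
  a != 0 -> hdist v (v - a *: delta_mx 0 i) = 1%N.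
Proof.
move=> a0; apply: etrans (cards1 i); apply: eq_card => j; rewrite !inE !mxE eqxx /=.
have [->|ji] := eqVneq j i; last by rewrite mulr0 subr0 eqxx.
by rewrite mulr1 -[X in X != _]subr0 (inj_eq (addrI _)) eqr_opp eq_sym a0.
Qed.

Lemma hdist_eq1 n (v c : 'rV[F]_n) : hdist v c = 1%N ->
  exists2 i, (v - c) 0 i != 0 & c = v - (v - c) 0 i *: delta_mx 0 i.
Proof.
move/eqP/cards1P => [i supp_i]; exists i.
  by have := set11 i; rewrite -supp_i inE !mxE subr_eq0.
apply/rowP => j; rewrite !mxE eqxx /=; have [->|ji] := eqVneq j i.
  by rewrite mulr1 subKr.
have : j \notin [set i] by rewrite inE.
by rewrite -supp_i inE negbK => /eqP ->; rewrite mulr0 subr0.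
Qed.

Lemma pcm_syndrome_sub_delta r n (H : 'M[F]_(r, n)) v a i :
  H *m (v - a *: delta_mx 0 i)^T = H *m v^T - a *: col i H.
Proof. by rewrite linearB linearZ /= trmx_delta mulmxBr -scalemxAr -colE. Qed.

Lemma pcm_code_col_neq0 r n (H : 'M[F]_(r, n)) :
    (forall x y, x \in pcm_code H -> y \in pcm_code H -> x != y -> (2 <= hdist x y)%N) ->
  forall i, col i H != 0.
Proof.
move=> dist2 i; apply/eqP => Hi0; pose e : 'rV[F]_n := 0 - 1 *: delta_mx 0 i.
suff : (1 < hdist 0 e)%N by rewrite hdist_sub_delta ?oner_eq0.
apply: dist2.
- by rewrite !inE trmx0 mulmx0.
- by rewrite inE pcm_syndrome_sub_delta Hi0 trmx0 mulmx0 scaler0 subrr.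
apply/eqP => /rowP/(_ i); rewrite !mxE !eqxx mul1r sub0r => /eqP.
by rewrite eq_sym oppr_eq0 oner_eq0.
Qed.

(* The codewords at distance one from [v] are the [v - a e_i] with [a *: col i H] the
   syndrome of [v], and [a] is determined by [i]. *)
Lemma nb_at_pcm_code1 r n (H : 'M[F]_(r, n)) (v : 'rV[F]_n) : H *m v^T != 0 ->
  nb_at (pcm_code H) v 1 = #|[set i | proportional (col i H) (H *m v^T)]|.
Proof.
rewrite /nb_at; set u := H *m v^T => u0.
pose S := [set p : F * 'I_n | p.1 *: col p.2 H == u].
have S_neq0 p : p \in S -> p.1 != 0.
  by rewrite inE; apply: contraTneq => ->; rewrite scale0r eq_sym.
have -> : [set c in pcm_code H | hdist v c == 1%N] =
          (fun p => v - p.1 *: delta_mx 0 p.2) @: S.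
  apply/setP => c; rewrite !inE; apply/andP/imsetP => [[cC /eqP]|[[a i] pS ->]].
    move=> /hdist_eq1[i _ ec]; exists ((v - c) 0 i, i) => //.
    by rewrite ec pcm_syndrome_sub_delta subr_eq0 eq_sym in cC; rewrite inE.
  split; last by rewrite hdist_sub_delta ?(S_neq0 _ pS).
  by move: pS; rewrite !inE pcm_syndrome_sub_delta subr_eq0 eq_sym.
rewrite card_in_imset => [|[a i] [b j] /S_neq0 /= a0 _]; last first.
  move=> /addrI/oppr_inj/rowP/(_ i); rewrite !mxE !eqxx !mulr_natr.
  have [<-|ji] := eqVneq j i; first by rewrite /= !mulr1n => ->.
  by rewrite /= mulr1n mulr0n => a_0; rewrite a_0 eqxx in a0.
have snd_inj : {in S &, injective snd}.
  move=> [a i] [b j]; rewrite !inE /= => /eqP aS /eqP bS ij; subst j; congr (_, _).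
  have coli0 : col i H != 0 by apply: contraNneq u0 => c0; rewrite -aS c0 scaler0.
  apply/eqP; move: (subrr u); rewrite -{1}aS -bS -scalerBl => /eqP.
  by rewrite scaler_eq0 (negPf coli0) orbF subr_eq0.
rewrite -(card_in_imset snd_inj); apply: eq_card => i; rewrite inE.
apply/imsetP/proportionalP => [[[a j] aS ->]|[a _ aS]].
  by exists a; rewrite ?(S_neq0 _ aS) //; apply/eqP; move: aS; rewrite inE.
by exists (a, i); rewrite ?inE ?aS.
Qed.

End DistanceOne.

Section ColumnClasses.
Variable F : finFieldType.

Lemma pcm_code_class_card r n na (H : 'M[F]_(r, n)) : row_free H ->
    (forall v, v \notin pcm_code H -> nb_at (pcm_code H) v 1 = na) ->
  forall u : 'cV[F]_r, u != 0 -> #|[set i | proportional u (col i H)]| = na.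
Proof.
move=> H_free nb1 u u0.
have [v vu] : exists v : 'rV[F]_n, H *m v^T = u.
  have H_full : row_full H^T by rewrite /row_full mxrank_tr.
  have /submxP[v uv] := submx_full u^T H_full.
  by exists v; rewrite -[u]trmxK uv trmx_mul trmxK.
have vC : v \notin pcm_code H by rewrite inE vu.
rewrite -(nb1 v vC) nb_at_pcm_code1 vu //; apply: eq_card => i; rewrite !inE.
by apply/idP/idP; apply: proportional_sym.
Qed.

Lemma pcm_col_class_bij r n na nb (H : 'M[F]_(r, n)) (b : 'I_nb -> 'cV[F]_r) :
    (forall i, col i H != 0) ->
    (forall u, u != 0 -> #|[set i | proportional u (col i H)]| = na) ->
    proj_point_reps b ->
  exists2 tau : 'I_na * 'I_nb -> 'I_n, bijective tau &
    forall j1 j2, proportional (b j2) (col (tau (j1, j2)) H).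
Proof.
move=> H0 H_class [b0 b_inj b_cover].
pose X j := [set i | proportional (b j) (col i H)].
have X_disjoint j j' : j != j' -> [disjoint X j & X j'].
  by move=> neq; apply: proportional_disjoint; apply: contra neq => /b_inj ->.
have X_cover i : exists j, i \in X j.
  by have [j bj] := b_cover _ (H0 i); exists j; rewrite inE.
have [tau tau_bij tau_class] :=
  uniform_cover_bij X_disjoint X_cover (fun j => H_class _ (b0 j)).
by exists tau => // j1 j2; have := tau_class j1 j2; rewrite inE.
Qed.

End ColumnClasses.

Section MonomialEquivalence.
Variables (F : finFieldType) (n N : nat) (s : 'I_n -> 'I_N) (lam : 'I_n -> F).
Hypotheses (s_bij : bijective s) (lam_neq0 : forall i, lam i != 0).

Definition scaled_perm_mx : 'M[F]_(n, N) := \matrix_(i, j) (if s i == j then lam i else 0).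

Lemma monomial_scaled_perm_mx : monomial scaled_perm_mx.
Proof.
have [s' sK s'K] := s_bij.
split=> [i|j]; [apply: etrans (cards1 (s i)) | apply: etrans (cards1 (s' j))];
  apply: eq_card => k; rewrite !inE mxE.
  case: (s i =P k) => [<-|ne]; first by rewrite eqxx lam_neq0.
  by rewrite eqxx; apply/esym/eqP => e; apply: ne; rewrite e.
case: (s k =P j) => [<-|ne]; first by rewrite sK eqxx lam_neq0.
by rewrite eqxx; apply/esym/eqP => e; apply: ne; rewrite e s'K.
Qed.

Lemma col_mul_tr_scaled_perm_mx r (H : 'M[F]_(r, N)) i :
  col i (H *m scaled_perm_mx^T) = lam i *: col (s i) H.
Proof.
apply/colP => k; rewrite !mxE (bigD1 (s i)) //= big1 => [|j sij].
  by rewrite !mxE eqxx addr0 mulrC.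
by rewrite !mxE eq_sym (negPf sij) mulr0.
Qed.

Lemma scaled_perm_mx_linv : exists M' : 'M[F]_(N, n), M' *m scaled_perm_mx = 1%:M.
Proof.
have [s' sK s'K] := s_bij.
exists (\matrix_(j, i) (if s' j == i then (lam i)^-1 else 0)).
apply/matrixP => j j'; rewrite !mxE (bigD1 (s' j)) //= big1 => [|i ni].
  rewrite !mxE !eqxx s'K addr0; case: eqP => _; by rewrite ?mulVf ?mulr0.
by rewrite !mxE eq_sym (negPf ni) mul0r.
Qed.

End MonomialEquivalence.

Lemma lin_equiv_pcm_code (F : finFieldType) r n N (H1 : 'M[F]_(r, n)) (H2 : 'M[F]_(r, N))
    (s : 'I_n -> 'I_N) :
  bijective s -> (forall i, proportional (col (s i) H2) (col i H1)) ->
  lin_equiv (pcm_code H1) (pcm_code H2).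
Proof.
move=> s_bij H12; pose lam i := xchoose (existsP (H12 i)).
have /all_and2[lam_neq0 lamP] i : lam i != 0 /\ lam i *: col (s i) H2 = col i H1.
  by have /andP[? /eqP ?] := xchooseP (existsP (H12 i)).
pose M := scaled_perm_mx s lam.
have H2M : H2 *m M^T = H1.
  apply/matrixP => k i.
  have := congr1 (fun c : 'cV[F]_r => c k 0) (col_mul_tr_scaled_perm_mx s lam H2 i).
  by rewrite lamP !mxE.
have [M' M'M] := scaled_perm_mx_linv s_bij lam_neq0.
exists M; split; first exact: monomial_scaled_perm_mx.
apply/setP => y; rewrite inE; apply/idP/imsetP => [yC|[x xC ->]].
  exists (y *m M'); last by rewrite -mulmxA M'M mulmx1.
  by rewrite inE -H2M trmx_mul !mulmxA -(mulmxA H2) -trmx_mul M'M trmx1 mulmx1.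
by rewrite inE in xC; rewrite trmx_mul mulmxA H2M.
Qed.

Section Classification.
Variable F : finFieldType.

Lemma repetition_gen_neq0 na (A : 'rV[F]_na) :
  gen_code A = repetition_code F na -> forall j, A 0 j != 0.
Proof.
move=> genA j; have : const_mx 1 \in gen_code A.
  by rewrite genA inE; apply/existsP; exists 1.
rewrite inE => /sub_rVP[a /rowP/(_ j)]; rewrite !mxE.
by move=> e; apply/eqP => Aj0; move: e; rewrite Aj0 mulr0 => /eqP; rewrite oner_eq0.
Qed.

Lemma lin_equiv_pcm_code_rV n na (H : 'rV[F]_n) (A : 'rV[F]_na) :
    (forall i, col i H != 0) ->
    (forall u, u != 0 -> #|[set i | proportional u (col i H)]| = na) ->
    (forall j, A 0 j != 0) ->
  lin_equiv (pcm_code H) (pcm_code A).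
Proof.
move=> H0 H_class A0.
have na_n : na = n.
  rewrite -(H_class 1%:M (oner_neq0 _)) -[RHS]card_ord; apply: eq_card => i.
  by rewrite inE proportional_11 ?oner_neq0.
subst na; apply: (@lin_equiv_pcm_code _ _ _ _ _ _ id) => [|i]; first by exists id.
apply: proportional_11 => //; apply: contra (A0 i) => /eqP/colP/(_ 0).
by rewrite !mxE => ->.
Qed.

(* [A *t B] has [1 * m] rows, which is not convertible to [m]. *)
Lemma col_tensmx_rV na m nb (A : 'rV[F]_na) (B : 'M[F]_(m, nb)) j1 j2 :
  col (mxtens_index (j1, j2)) (A *t B) =
  A 0 j1 *: castmx (esym (mul1n m), erefl 1%N) (col j2 B).
Proof.
apply/colP => k; case: (mxtens_indexP k) => k1 k2.
rewrite !(mxE, castmxE) !mxtens_indexK ord1 /=; congr (_ * B _ _).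
by apply: val_inj; rewrite /= [k1]ord1 mul0n.
Qed.

Lemma col_castmx_rows r r' n (e : r = r') (H : 'M[F]_(r, n)) i :
  col i (castmx (e, erefl n) H) = castmx (e, erefl 1%N) (col i H).
Proof. by case: r' / e. Qed.

Lemma lin_equiv_pcm_code_tensmx r n na nb (H : 'M[F]_(r, n)) (A : 'rV[F]_na)
    (B : 'M[F]_(r, nb)) :
  (forall i, col i H != 0) ->
  (forall u, u != 0 -> #|[set i | proportional u (col i H)]| = na) ->
  (forall j, A 0 j != 0) -> proj_point_reps (fun j => col j B) ->
  lin_equiv (pcm_code H) (pcm_code (A *t B)).
Proof.
move=> H0 H_class A0 B_reps.
have [tau [tau' tauK tau'K] tau_class] := pcm_col_class_bij H0 H_class B_reps.
rewrite -(pcm_code_castmx (esym (mul1n r))).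
apply: (@lin_equiv_pcm_code _ _ _ _ _ _ (fun i => mxtens_index (tau' i))) => [|i].
  exists (fun k => tau (mxtens_unindex k)) => [i|k] /=.
    by rewrite mxtens_indexK tau'K.
  by rewrite tauK mxtens_unindexK.
case: (tau' i) (tau'K i) => j1 j2 <-.
rewrite col_tensmx_rV col_castmx_rows; apply: proportional_sym.
apply: proportionalZr (A0 j1) _; rewrite proportional_castmx.
exact: proportional_sym (tau_class j1 j2).
Qed.

Lemma pcm_code_tensmx_hamming r n na (H : 'M[F]_(r, n)) (A : 'rV[F]_na) :
    (0 < n)%N -> (2 <= r)%N -> (forall i, col i H != 0) ->
    (forall u, u != 0 -> #|[set i | proportional u (col i H)]| = na) ->
    (forall j, A 0 j != 0) ->
  [/\ (na %| n)%N, exists m (B : 'M[F]_(m, n %/ na)), hamming_pcm B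
    & forall m (B : 'M[F]_(m, n %/ na)), hamming_pcm B ->
        lin_equiv (pcm_code H) (pcm_code (A *t B))].
Proof.
move=> n_gt0 r_ge2 H0 H_class A0.
have [nb [b b_reps]] := proj_point_reps_exist F r.
have [tau tau_bij _] := pcm_col_class_bij H0 H_class b_reps.
have n_eq : n = (na * nb)%N.
  by rewrite -[n]card_ord -(bij_eq_card tau_bij) card_prod !card_ord.
have na_gt0 : (0 < na)%N by move: n_gt0; rewrite n_eq muln_gt0 => /andP[].
have nb_eq : (n %/ na)%N = nb by rewrite n_eq mulKn.
split; first by rewrite n_eq dvdn_mulr.
  by rewrite nb_eq; exists r, (\matrix_(i, j) b j i 0); apply: reps_hamming_pcm.
move=> m B /hamming_pcm_reps B_reps; rewrite nb_eq in B B_reps *.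
have m_eq := proj_point_reps_dim B_reps b_reps; subst m.
exact: lin_equiv_pcm_code_tensmx H0 H_class A0 B_reps.
Qed.

End Classification.
Unset Implicit Arguments.

Theorem proposition3p11 (F : finFieldType) (n k na : nat)
  (C : {set 'rV[F]_n}) (A : 'M[F]_(1, na)) :
  is_nkd_code k 2 C ->
  completely_regular C ->
  covering_radius C = 1%N ->
  (forall v : 'rV[F]_n, v \notin C -> nb_at C v 1 = na) ->
  gen_code A = repetition_code F na ->
  ((k = n.-1)%N -> lin_equiv C (pcm_code A)) /\
  ((k < n.-1)%N ->
     [/\ (na %| n)%N,
         exists m (B : 'M[F]_(m, n %/ na)), hamming_pcm B
       & forall m (B : 'M[F]_(m, n %/ na)), hamming_pcm B ->
           lin_equiv C (pcm_code (A *t B))]).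
Proof.
move=> [C_lin card_C [x _ [y _ [xy _]]] dist2] _ _ nb1 genA.
have n_gt0 : (0 < n)%N.
  by move: x y xy; case: (n) => // x y; rewrite (thinmx0 x) (thinmx0 y) eqxx.
have [k' [G CG]] := linear_code_gen C_lin.
have [r [H [H_free GH]]] := gen_code_pcm G; rewrite GH in CG; subst C.
have r_le_n : (r <= n)%N by rewrite -(eqP H_free) rank_leq_col.
have k_eq : k = (n - r)%N.
  by apply: (expnI (card_finNzRing_gt1 F)); rewrite -card_C card_pcm_code.
have H0 := pcm_code_col_neq0 dist2.
have H_class := pcm_code_class_card H_free nb1.
have A0 := repetition_gen_neq0 genA.
split=> [k_n1 | k_lt]; last by apply: pcm_code_tensmx_hamming => //; lia.
have r1 : r = 1%N by lia.
by subst r; apply: lin_equiv_pcm_code_rV.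
Qed.
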